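(* Let $M$ be a finite ordinal monoid and $h\colon\Sigma\to M$. Then $(\mathcal P(M),\{1\},\subseteq,\cdot,-^\omega,-^\sharp)$ and $(\mathrm{Sat}(h),\{1\},\subseteq,\cdot,-^\omega,-^\sharp)$ (with the operations of the power ordinal monoid) are ordinal monoids with merge.
   Context: An ordinal monoid is a set $M$ with $\pi\colon M^{\mathrm{ord}}\to M$ (words of countable ordinal length), $\pi(x)=x$ on one-letter words, and generalised associativity $\pi((\pi(u_\iota))_{\iota<\alpha})=\pi(u_0u_1\cdots)$. Write $1=\pi(\varepsilon)$, $x\cdot y=\pi(xy)$, $x^\omega=\pi(xxx\cdots)$; a finite ordinal monoid is determined by $(M,1,\cdot,-^\omega)$. It is ordered by a partial order $\le$ if $u\le v$ letterwise implies $\pi(u)\le\pi(v)$. Power ordinal monoid: $\mathcal P(M)$ with $\Pi((X_\iota)_\iota)=\{\pi((x_\iota)_\iota):x_\iota\in X_\iota\}$; unit $\{1\}$, $X\cdot Y=\{xy\}$, $X^\omega=\{u\cdot v^\omega:u,v\in X^+\}$ ($X^+$ = finite nonempty products of elements of $X$). In a finite semigroup $x^{!}$ is the idempotent power of $x$ and $x^{!+k}$ the eventual value of $x^{n!+k}$; $X^\sharp=\bigcup_{k\in\mathbb N}X^{!+k}$ (powers in $(\mathcal P(M),\cdot)$). $\mathrm{Sat}(h)$ is the least subset of $\mathcal P(M)$ containing all $\{h(a)\}$ ($a\in\Sigma$) and $\{1\}$ closed under binary product, $\sharp$ and $\omega$. Ordinal monoid with merge: a tuple $(M,1,\le,\cdot,-^\omega,-^\sharp)$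 with $M$ finite, $(M,1,\le,\cdot,-^\omega)$ the presentation of an ordered finite ordinal monoid, and $-^\sharp\colon M\to M$ monotone such that for all $a,b\in M$ and all integers $k$: $a^{!+k}\le a^\sharp$, $(a^{!})^\sharp=a^{!}$, $a^\sharp\cdot a^\sharp=(a^\sharp)^\sharp=a^\sharp$, and $(a\cdot b)^\sharp=a\cdot(b\cdot a)^\sharp\cdot b$. *)

From HB Require Import structures.
From mathcomp Require Import all_boot all_order all_algebra.
From mathcomp Require Import boolp.

Set Implicit Arguments.
Unset Strict Implicit.
Unset Printing Implicit Defensive.

(* the order is a (strict) well-order.  Words of the same ordinal length are *)
(* identified up to order isomorphism.                                       *)

Record oword (A : Type) := OWord {
  oidx : Type;
  olt : oidx -> oidx -> Prop;
  oletter : oidx -> A }.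
Arguments oidx {A} _.
Arguments olt {A} _ _ _.
Arguments oletter {A} _ _.

Definition countable_type (I : Type) : Prop :=
  exists f : I -> nat, injective f.

Definition strict_wellorder (I : Type) (lt : I -> I -> Prop) : Prop :=
  [/\ forall x, ~ lt x x,
      forall x y z, lt x y -> lt y z -> lt x z,
      forall x y, x = y \/ lt x y \/ lt y x
    & well_founded lt].

Definition valid_word (A : Type) (w : oword A) : Prop :=
  countable_type (oidx w) /\ strict_wellorder (olt w).

Definition word_over (A : Type) (S : A -> Prop) (w : oword A) : Prop :=
  forall i, S (oletter w i).

Definition word_iso (A : Type) (w1 w2 : oword A) : Prop :=
  exists f : oidx w1 -> oidx w2,
    [/\ bijective f,
        forall i j, olt w1 i j <-> olt w2 (f i) (f j)
      & forall i, oletter w2 (f i) = oletter w1 i].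

Definition eps_word (A : Type) : oword A :=
  @OWord A void (fun _ _ => False) (fun v => match v with end).
Definition single_word (A : Type) (x : A) : oword A :=
  @OWord A unit (fun _ _ => False) (fun _ => x).
Definition pair_word (A : Type) (x y : A) : oword A :=
  @OWord A bool (fun a b => ~~ a && b) (fun b => if b then y else x).
Definition omega_word (A : Type) (x : A) : oword A :=
  @OWord A nat (fun m n => (m < n)%N) (fun _ => x).

Definition map_word (A B : Type) (f : A -> B) (w : oword A) : oword B :=
  @OWord B (oidx w) (olt w) (fun i => f (oletter w i)).

(* concatenation of a word of words (lexicographic sum of the index orders) *)
Definition flat_idx (A : Type) (W : oword (oword A)) : Type :=
  {i : oidx W & oidx (oletter W i)}.

Definition flat_lt (A : Type) (W : oword (oword A)) (p q : flat_idx W) : Prop :=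
  olt W (projT1 p) (projT1 q) \/
  exists e : projT1 p = projT1 q,
    olt (oletter W (projT1 q)) (eq_rect _ (fun i => oidx (oletter W i)) (projT2 p) _ e) (projT2 q).

Definition flatten_word (A : Type) (W : oword (oword A)) : oword A :=
  @OWord A (flat_idx W) (@flat_lt A W)
    (fun p => oletter (oletter W (projT1 p)) (projT2 p)).

Definition ordinal_monoid (A : Type) (S : A -> Prop) (pi : oword A -> A) : Prop :=
  [/\ forall w, valid_word w -> word_over S w -> S (pi w),
      forall w1 w2, valid_word w1 -> valid_word w2 -> word_over S w1 ->
        word_iso w1 w2 -> pi w1 = pi w2,
      forall x, S x -> pi (single_word x) = x
    & forall W : oword (oword A), valid_word W ->
        (forall i, valid_word (oletter W i) /\ word_over S (oletter W i)) ->
        pi (map_word pi W) = pi (flatten_word W)].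

Definition partial_order_on (A : Type) (S : A -> Prop) (le : A -> A -> Prop) :=
  [/\ forall x, S x -> le x x,
      forall x y, S x -> S y -> le x y -> le y x -> x = y
    & forall x y z, S x -> S y -> S z -> le x y -> le y z -> le x z].

Definition ordered_by (A : Type) (S : A -> Prop) (le : A -> A -> Prop)
  (pi : oword A -> A) : Prop :=
  forall (I : Type) (lt : I -> I -> Prop) (f g : I -> A),
    valid_word (OWord lt f) ->
    (forall i, [/\ S (f i), S (g i) & le (f i) (g i)]) ->
    le (pi (OWord lt f)) (pi (OWord lt g)).

Definition presentation_of (A : Type) (S : A -> Prop) (pi : oword A -> A)
  (one : A) (mul : A -> A -> A) (om : A -> A) : Prop :=
  [/\ one = pi (@eps_word A),
      forall x y, S x -> S y -> mul x y = pi (pair_word x y)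
    & forall x, S x -> om x = pi (omega_word x)].

Definition mpow (A : Type) (mul : A -> A -> A) (one : A) (x : A) (n : nat) : A :=
  iter n (mul x) one.

Definition eventual_pow (A : Type) (mul : A -> A -> A) (one : A)
  (x : A) (k : int) (y : A) : Prop :=
  exists N : nat, forall n : nat, (N <= n)%N ->
    exists j : nat, (j%:Z = (n`!)%:Z + k)%R /\ mpow mul one x j = y.

Definition ordinal_monoid_with_merge (T : finType) (S : T -> Prop)
  (one : T) (le : T -> T -> Prop) (mul : T -> T -> T) (om sharp : T -> T) : Prop :=
  [/\ partial_order_on S le,
      (exists pi : oword T -> T,
        [/\ ordinal_monoid S pi, ordered_by S le pi & presentation_of S pi one mul om]),
      (forall a, S a -> S (sharp a)),
      (forall a b, S a -> S b -> le a b -> le (sharp a) (sharp b))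
    & [/\ (forall a (k : int) y, S a -> eventual_pow mul one a k y -> le y (sharp a)),
          (forall a e, S a -> eventual_pow mul one a 0 e -> sharp e = e),
          (forall a, S a -> mul (sharp a) (sharp a) = sharp a),
          (forall a, S a -> sharp (sharp a) = sharp a)
        & (forall a b, S a -> S b -> sharp (mul a b) = mul (mul a (sharp (mul b a))) b)]].

Section Power.
Variables (M : finType) (pi : oword M -> M).

Definition om_one : M := pi (@eps_word M).
Definition om_mul (x y : M) : M := pi (pair_word x y).
Definition om_omega (x : M) : M := pi (omega_word x).

Definition set_one : {set M} := [set om_one].
Definition set_mul (X Y : {set M}) : {set M} :=
  [set om_mul x y | x in X, y in Y].
Definition set_plus (X : {set M}) : {set M} :=
  [set y | `[< exists s : seq M,
                 [/\ s != [::], all (fun x => x \in X) s & y = foldr om_mul om_one s] >]].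
Definition set_omega (X : {set M}) : {set M} :=
  [set om_mul u (om_omega v) | u in set_plus X, v in set_plus X].
Definition set_sharp (X : {set M}) : {set M} :=
  [set y | `[< exists (k : nat) (Y : {set M}),
                 eventual_pow set_mul set_one X k%:Z Y /\ y \in Y >]].
Definition set_le (X Y : {set M}) : Prop := X \subset Y.

Inductive Sat (Sigma : Type) (h : Sigma -> M) : {set M} -> Prop :=
| Sat_letter a : Sat h [set h a]
| Sat_one : Sat h set_one
| Sat_mul X Y : Sat h X -> Sat h Y -> Sat h (set_mul X Y)
| Sat_sharp X : Sat h X -> Sat h (set_sharp X)
| Sat_omega X : Sat h X -> Sat h (set_omega X).

End Power.

From HB Require Import structures.
From mathcomp Require Import all_boot all_order all_algebra.
From mathcomp Require Import boolp.
From mathcomp Require Import zify.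
From Stdlib Require Import Wellfounded Wf_nat.

(* Products in P(M) are computed letterwise, so P(M) inherits generalised
   associativity from M.  The presentation holds because, by Ramsey's theorem,
   every omega-product in the finite M factors as u v^omega with u and v finite
   products.  Since (P(M), .) is a finite monoid, the powers of X are
   eventually periodic and X^sharp is the union of the powers beyond the
   threshold; the merge axioms are computations with these powers.
   For Sat(h) it remains to show closure under products of arbitrary countable
   well-ordered words.  By well-founded induction on the right end of a
   segment, its product is either a shorter segment times a letter, or, at a
   limit, an omega-product of shorter segments along a cofinal sequence; both
   are reduced to . and omega. *)

Set Implicit Arguments.
Unset Strict Implicit.
Unset Printing Implicit Defensive.

Lemma bij_of_inj_surj (T1 T2 : Type) (f : T1 -> T2) :
  injective f -> (forall y, exists x, f x = y) -> bijective f.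
Proof.
move=> f_inj f_surj; have [g fgK] := choice f_surj.
by exists g => [x|y]; [apply: f_inj; rewrite fgK|apply: fgK].
Qed.

Lemma sval_inj (A : Type) (P : A -> Prop) : injective (@proj1_sig A P).
Proof. by move=> u v; apply: eq_sig_hprop => x p q; apply: Prop_irrelevance. Qed.

Lemma well_founded_ltn : well_founded (fun m n : nat => m < n).
Proof. by apply: (wf_incl _ _ _ _ lt_wf) => m n /ltP. Qed.

Section ValidWords.
Variable A : Type.

Lemma valid_word_of (I : Type) (lt : I -> I -> Prop) (f : I -> A) (c : I -> nat) :
  injective c ->
  (forall x, ~ lt x x) -> (forall x y z, lt x y -> lt y z -> lt x z) ->
  (forall x y, x = y \/ lt x y \/ lt y x) -> well_founded lt ->
  valid_word (OWord lt f).
Proof. by move=> c_inj irr tr tot wf; split; [exists c|split]. Qed.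

Lemma valid_nat_word (f : nat -> A) :
  valid_word (@OWord A nat (fun m n => m < n) f).
Proof.
apply: (@valid_word_of _ _ _ id).
- by [].
- by move=> x; rewrite ltnn.
- by move=> x y z; apply: ltn_trans.
- by move=> x y; case: ltngtP; auto.
- exact: well_founded_ltn.
Qed.

Lemma valid_ord_word n (f : 'I_n -> A) :
  valid_word (@OWord A 'I_n (fun i j => i < j) f).
Proof.
apply: (@valid_word_of _ _ _ val); first exact: val_inj.
- by move=> x; rewrite ltnn.
- by move=> x y z; apply: ltn_trans.
- by move=> x y; case: ltngtP; auto => /val_inj; auto.
- exact: wf_inverse_image well_founded_ltn.
Qed.

Lemma valid_pair_word (x y : A) : valid_word (pair_word x y).
Proof.
apply: (@valid_word_of _ _ _ nat_of_bool).
- by case; case.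
- by case.
- by case; case; case.
- by case; case; auto.
- by case; constructor; case; constructor; case.
Qed.

Lemma valid_single_word (x : A) : valid_word (single_word x).
Proof.
apply: (@valid_word_of _ _ _ (fun _ => 0)).
- by case; case.
- by case.
- by case.
- by case; case; auto.
- by case; constructor.
Qed.

Lemma valid_eps_word : valid_word (@eps_word A).
Proof. by apply: (@valid_word_of _ _ _ (fun v : void => match v with end)); case. Qed.

Lemma valid_word_iso (w1 w2 : oword A) :
  word_iso w1 w2 -> valid_word w2 -> valid_word w1.
Proof.
case: w1 => I1 l1 f1; case: w2 => I2 l2 f2 [F [F_bij F_lt _]] /=.
move=> [[c c_inj] [irr tr tot wf]]; have F_inj := bij_inj F_bij.
apply: (@valid_word_of _ _ _ (c \o F)) => /=.
- by move=> x y /c_inj /F_inj.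
- by move=> x /F_lt; apply: irr.
- by move=> x y z /F_lt lxy /F_lt lyz; apply/F_lt; apply: tr lxy lyz.
- by move=> x y; case: (tot (F x) (F y)) => [/F_inj ->|[/F_lt|/F_lt]]; auto.
- by apply: (wf_incl _ _ _ _ (wf_inverse_image _ _ _ F wf)) => x y /F_lt.
Qed.

Lemma word_iso_sym (w1 w2 : oword A) : word_iso w1 w2 -> word_iso w2 w1.
Proof.
case: w1 => I1 l1 f1; case: w2 => I2 l2 f2 [F [[G FK GK] F_lt F_letter]] /=.
exists G; split; first by exists F.
- by move=> i j; rewrite F_lt !GK.
- by move=> i; rewrite -{2}(GK i) F_letter.
Qed.

Lemma flat_lt_same (W : oword (oword A)) i (a b : oidx (oletter W i)) :
  flat_lt (existT _ i a) (existT _ i b) <-> olt W i i \/ olt (oletter W i) a b.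
Proof.
rewrite /flat_lt /=; split; case=> [h|h]; auto.
- by case: h => e; rewrite (Prop_irrelevance e erefl); right.
- by right; exists erefl.
Qed.

Lemma flat_lt_diff (W : oword (oword A)) i j
    (a : oidx (oletter W i)) (b : oidx (oletter W j)) :
  i <> j -> flat_lt (existT _ i a) (existT _ j b) <-> olt W i j.
Proof. by move=> ij; rewrite /flat_lt /=; split; [case=> // [[]]|left]. Qed.

Definition fin_word (f : nat -> A) (a n : nat) : oword A :=
  @OWord A 'I_n (fun i j => i < j) (fun i => f (a + i)).

Definition nat_word (f : nat -> A) : oword A :=
  @OWord A nat (fun m n => m < n) f.

Lemma map_pair_word B (g : A -> B) (w1 w2 : A) :
  pair_word (g w1) (g w2) = map_word g (pair_word w1 w2).
Proof. by rewrite /map_word /pair_word /=; congr OWord; apply: funext; case. Qed.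

End ValidWords.

Definition unbounded (P : nat -> Prop) := forall N, exists n, N <= n /\ P n.

Lemma unbounded_pigeonhole (T : finType) (P : nat -> Prop) (g : nat -> T) :
  unbounded P -> exists t, unbounded (fun n => P n /\ g n = t).
Proof.
move=> P_unb; apply: contrapT => none.
have bounded t : exists N, forall n, N <= n -> ~ (P n /\ g n = t).
  apply: contrapT => t_unb; apply: none; exists t => N.
  apply: contrapT => noN; apply: t_unb; exists N => n Nn Pn; apply: noN.
  by exists n.
have [Nf Nf_bound] := choice bounded.
have [n [Nn Pn]] := P_unb (\max_(t : T) Nf t).
apply: (Nf_bound (g n) n) => //; apply: leq_trans Nn.
exact: leq_bigmax_cond.
Qed.

Lemma ramsey_consecutive (T : finType) (c : nat -> nat -> T) :
  exists b : nat -> nat, [/\ 0 < b 0, (forall k, b k < b k.+1) &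
    forall k, c (b k) (b k.+1) = c (b 0) (b 1)].
Proof.
pose St := {Q : nat -> Prop | unbounded Q}.
have step_ex (s : St) : exists r : nat * T * St,
    sval s r.1.1 /\ forall n, sval r.2 n -> [/\ sval s n, r.1.1 < n & c r.1.1 n = r.1.2].
  case: s => Q Q_unb /=; have [a [_ Qa]] := Q_unb 0.
  have Qa_unb : unbounded (fun n => Q n /\ a < n).
    move=> N; have [n [Nn Qn]] := Q_unb (N + a.+1).
    by exists n; split; [|split => //]; lia.
  have [t t_unb] := unbounded_pigeonhole (c a) Qa_unb.
  by exists (a, t, exist _ _ t_unb) => /=; split => // n [[]].
have [step stepP] := choice step_ex.
have pos_unb : unbounded (fun n => 0 < n) by move=> N; exists N.+1.
pose st k := iter k (fun s => (step s).2) (exist _ _ pos_unb : St).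
pose a k := (step (st k)).1.1.
pose col k := (step (st k)).1.2.
have st_sub k l : k <= l -> forall n, sval (st l) n -> sval (st k) n.
  elim: l => [|l IH]; first by rewrite leqn0 => /eqP ->.
  rewrite leq_eqVlt => /orP [/eqP -> //|]; rewrite ltnS => /IH kl n.
  by rewrite /st iterS => /((stepP (st l)).2) [/kl].
have a_st k : sval (st k) (a k) by exact: (stepP (st k)).1.
have a_col k l : k < l -> a k < a l /\ c (a k) (a l) = col k.
  move=> kl; have := st_sub k.+1 l kl _ (a_st l).
  by rewrite /st iterS => /((stepP (st k)).2) [].
have [t t_unb] := unbounded_pigeonhole col (P := fun _ => True)
  (fun N => ex_intro _ N (conj (leqnn N) I)).
have next_ex m : exists n, m < n /\ col n = t.
  by have [n [mn [_ cn]]] := t_unb m.+1; exists n.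
have [next nextP] := choice next_ex.
pose d k := iter k.+1 next 0.
have d_inc k : d k < d k.+1 by rewrite /d iterS; exact: (nextP _).1.
have d_col k : col (d k) = t by rewrite /d iterS; exact: (nextP _).2.
exists (fun k => a (d k)); split.
- exact: st_sub 0 _ (leq0n _) _ (a_st (d 0)).
- by move=> k; exact: (a_col _ _ (d_inc k)).1.
- by move=> k; rewrite (a_col _ _ (d_inc k)).2 (a_col _ _ (d_inc 0)).2 !d_col.
Qed.

Section OrdinalMonoid.
Variables (A : finType) (S : A -> Prop) (pi : oword A -> A).
Hypothesis piH : ordinal_monoid S pi.

Local Notation mul := (om_mul pi).
Local Notation one := (om_one pi).

Lemma pi_iso (w1 w2 : oword A) : valid_word w2 -> word_over S w1 ->
  word_iso w1 w2 -> pi w1 = pi w2.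
Proof.
case: piH => _ pi_isoH _ _ v2 S1 iso.
by apply: pi_isoH; [apply: valid_word_iso iso v2|exact: v2|exact: S1|exact: iso].
Qed.

Lemma pi_flatten_iso (W : oword (oword A)) (w : oword A) : valid_word W ->
  (forall i, valid_word (oletter W i) /\ word_over S (oletter W i)) ->
  valid_word w -> word_iso (flatten_word W) w -> pi (map_word pi W) = pi w.
Proof.
move=> vW vWi vw iso; case: piH => _ _ _ pi_assoc; rewrite pi_assoc; last first.
- exact: vWi.
- exact: vW.
by apply: pi_iso; [exact: vw|case=> i j /=; apply: (vWi i).2|exact: iso].
Qed.

Lemma pi_fin_word0 (f : nat -> A) a : pi (fin_word f a 0) = one.
Proof.
symmetry; apply: pi_iso; [exact: valid_ord_word|by case|].
exists (fun v : void => match v with end); split; try by case.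
apply: bij_of_inj_surj; first by case.
by case=> m i; exfalso; move: i; rewrite ltn0.
Qed.

Lemma pi_fin_word1 (f : nat -> A) a : S (f a) -> pi (fin_word f a 1) = f a.
Proof.
move=> Sfa; case: piH => _ _ pi_single _; rewrite -[RHS]pi_single //.
apply: pi_iso; [exact: valid_single_word|by move=> i; rewrite /= ord1 addn0|].
exists (fun _ => tt); split => //.
- apply: bij_of_inj_surj; last by case; exists ord0.
  by move=> i j _; rewrite (ord1 i) (ord1 j).
- by move=> i j; rewrite (ord1 i) (ord1 j).
- by move=> i; rewrite /= ord1 addn0.
Qed.

Definition cat_index (f g : nat -> A) a n c m
    (p : flat_idx (pair_word (fin_word f a n) (fin_word g c m))) : 'I_(n + m) :=
  let: existT b i := p in
  (if b return oidx (oletter (pair_word (fin_word f a n) (fin_word g c m)) b) -> 'I_(n + m)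
   then fun j => rshift n j else fun i => lshift m i) i.

Lemma pi_fin_wordD (f : nat -> A) a n m : (forall k, S (f k)) ->
  pi (fin_word f a (n + m)) = mul (pi (fin_word f a n)) (pi (fin_word f (a + n) m)).
Proof.
move=> Sf; rewrite /om_mul map_pair_word; symmetry.
apply: pi_flatten_iso; [exact: valid_pair_word| |exact: valid_ord_word|].
  by case; split => [|i]; [exact: valid_ord_word|exact: Sf|exact: valid_ord_word|exact: Sf].
exists (@cat_index f f a n (a + n) m); split.
- apply: bij_of_inj_surj.
  + case=> [[] i] [[] j] /= /(congr1 val) /= e.
    * by congr existT; apply: val_inj; apply/eqP; rewrite -(eqn_add2l n) e.
    * by move: (ltn_ord j); rewrite -e ltnNge leq_addr.
    * by move: (ltn_ord i); rewrite e ltnNge leq_addr.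
    * by congr existT; apply: val_inj.
  + move=> y; case: (splitP y) => [i yi|j yj].
    * by exists (existT _ false i); apply: val_inj; rewrite /= yi.
    * by exists (existT _ true j); apply: val_inj; rewrite /= yj.
- case=> [[] i] [[] j] /=.
  + by rewrite flat_lt_same /= ltn_add2l; split; [case|right].
  + rewrite flat_lt_diff //=; split => // ji; exfalso.
    by move: (leq_trans ji (ltnW (ltn_ord j))); rewrite ltnNge leq_addr.
  + by rewrite flat_lt_diff //=; split => // _; apply: leq_trans (ltn_ord i) (leq_addr _ _).
  + by rewrite flat_lt_same /=; split; [case|right].
- by case=> [[] i] /=; rewrite ?addnA.
Qed.

Definition split_index (f g : nat -> A) n
    (p : flat_idx (pair_word (fin_word f 0 n) (nat_word g))) : nat :=
  let: existT b i := p in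
  (if b return oidx (oletter (pair_word (fin_word f 0 n) (nat_word g)) b) -> nat
   then fun j => n + j else fun i => val i) i.

Lemma pi_nat_word_cat (f : nat -> A) n : (forall k, S (f k)) ->
  pi (nat_word f) = mul (pi (fin_word f 0 n)) (pi (nat_word (fun k => f (n + k)))).
Proof.
move=> Sf; rewrite /om_mul map_pair_word; symmetry.
apply: pi_flatten_iso; [exact: valid_pair_word| |exact: valid_nat_word|].
  by case; split => [|i]; [exact: valid_nat_word|exact: Sf|exact: valid_ord_word|exact: Sf].
exists (@split_index f (fun k => f (n + k)) n); split.
- apply: bij_of_inj_surj.
  + case=> [[] i] [[] j] /= e.
    * by congr existT; apply/eqP; rewrite -(eqn_add2l n) e.
    * by move: (ltn_ord j); rewrite -e ltnNge leq_addr.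
    * by move: (ltn_ord i); rewrite e ltnNge leq_addr.
    * by congr existT; apply: val_inj.
  + move=> y; case: (ltnP y n) => [yn|ny]; first by exists (existT _ false (Ordinal yn)).
    exists (existT (fun b => oidx (oletter
      (pair_word (fin_word f 0 n) (nat_word (fun k => f (n + k)))) b)) true (y - n)).
    by rewrite /= subnKC.
- case=> [[] i] [[] j] /=.
  + by rewrite flat_lt_same /= ltn_add2l; split; [case|right].
  + rewrite flat_lt_diff //=; split => // ji; exfalso.
    by move: (leq_trans ji (ltnW (ltn_ord j))); rewrite ltnNge leq_addr.
  + by rewrite flat_lt_diff //=; split => // _; apply: leq_trans (ltn_ord i) (leq_addr _ _).
  + by rewrite flat_lt_same /=; split; [case|right].
- by case=> [[] i].
Qed.

Definition block_index (f : nat -> A) (b : nat -> nat)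
    (p : flat_idx (nat_word (fun k => fin_word f (b k) (b k.+1 - b k)))) : nat :=
  let: existT k i := p in b k + val i.

Lemma pi_nat_word_blocks (f : nat -> A) (b : nat -> nat) : (forall k, S (f k)) ->
  b 0 = 0 -> (forall k, b k < b k.+1) ->
  pi (nat_word f) = pi (nat_word (fun k => pi (fin_word f (b k) (b k.+1 - b k)))).
Proof.
move=> Sf b0 b_inc.
have b_mono : {homo b : k l / k <= l} := homo_leq leqnn leq_trans (fun k => ltnW (b_inc k)).
have block_lt k k' (i : 'I_(b k.+1 - b k)) (j : 'I_(b k'.+1 - b k')) :
    k < k' -> b k + i < b k' + j.
  move=> kk'; apply: (@leq_trans (b k.+1)); first by rewrite -ltn_subRL.
  exact: leq_trans (b_mono _ _ kk') (leq_addr _ _).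
symmetry.
change (pi (map_word pi (nat_word (fun k => fin_word f (b k) (b k.+1 - b k)))) =
  pi (nat_word f)).
apply: pi_flatten_iso; [exact: valid_nat_word| |exact: valid_nat_word|].
  by move=> k; split => [|i]; [exact: valid_ord_word|exact: Sf].
exists (@block_index f b); split.
- apply: bij_of_inj_surj.
  + case=> [k i] [k' j] /= e; case: (ltngtP k k') => kk'.
    * by move: (block_lt _ _ i j kk'); rewrite e ltnn.
    * by move: (block_lt _ _ j i kk'); rewrite e ltnn.
    * subst k'; congr existT; apply: val_inj; apply/eqP.
      by rewrite -(eqn_add2l (b k)) e.
  + move=> y; have y_below : exists k, y < b k.+1.
      exists y; elim: y => [|y IH]; first by rewrite (leq_ltn_trans _ (b_inc 0)).
      exact: leq_ltn_trans IH (b_inc _).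
    case: (ex_minnP y_below) => k yk k_min.
    have bky : b k <= y.
      case: k yk k_min => [|k] yk k_min; first by rewrite b0.
      by rewrite leqNgt; apply/negP => /k_min; rewrite ltnn.
    have yk' : y - b k < b k.+1 - b k by rewrite ltn_sub2r // (leq_ltn_trans bky yk).
    exists (existT (fun k => oidx (oletter
      (nat_word (fun k => fin_word f (b k) (b k.+1 - b k))) k)) k (Ordinal yk')).
    by rewrite /= subnKC.
- case=> [k i] [k' j] /=; case: (ltngtP k k') => kk'.
  + rewrite flat_lt_diff /=; last by move=> e; move: kk'; rewrite e ltnn.
    by rewrite kk'; split => // _; apply: block_lt.
  + rewrite flat_lt_diff /=; last by move=> e; move: kk'; rewrite e ltnn.
    rewrite ltnNge (ltnW kk'); split => // ji; exfalso.
    by move: (block_lt _ _ j i kk'); rewrite ltnNge (ltnW ji).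
  + by subst k'; rewrite flat_lt_same /= ltn_add2l ltnn; split; [case|right].
- by case.
Qed.

Lemma pi_fin_word_foldr (f : nat -> A) a n : (forall k, S (f k)) ->
  pi (fin_word f a n) = foldr mul one (map f (iota a n)).
Proof.
move=> Sf; elim: n a => [|n IH] a; first by rewrite pi_fin_word0.
rewrite /= -IH -(pi_fin_word1 (Sf a)).
by have := pi_fin_wordD a 1 n Sf; rewrite addn1.
Qed.

Lemma om_mul1x x : S x -> mul one x = x.
Proof.
move=> Sx; have := @pi_fin_wordD (fun _ => x) 0 0 1 (fun _ => Sx).
by rewrite pi_fin_word0 !pi_fin_word1.
Qed.

Lemma om_mulx1 x : S x -> mul x one = x.
Proof.
move=> Sx; have := @pi_fin_wordD (fun _ => x) 0 1 0 (fun _ => Sx).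
by rewrite pi_fin_word0 !pi_fin_word1.
Qed.

Lemma om_mulA x y z : S x -> S y -> S z -> mul (mul x y) z = mul x (mul y z).
Proof.
move=> Sx Sy Sz; pose f k := if k == 0 then x else if k == 1 then y else z.
have Sf k : S (f k) by rewrite /f; case: ifP => // _; case: ifP.
have xyz1 := @pi_fin_wordD f 0 2 1 Sf; have xyz2 := @pi_fin_wordD f 0 1 2 Sf.
have xy := @pi_fin_wordD f 0 1 1 Sf; have yz := @pi_fin_wordD f 1 1 1 Sf.
rewrite /= in xyz1 xyz2 xy yz.
by rewrite xy yz !pi_fin_word1 // in xyz1 xyz2; rewrite -xyz1 xyz2.
Qed.

(* Ramsey's theorem applied to the colouring {i < j} |-> pi (f i ... f (j - 1)). *)
Lemma pi_nat_word_omega (f : nat -> A) : (forall k, S (f k)) ->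
  exists n0 n1, [/\ 0 < n0, n0 < n1 &
    pi (nat_word f) = mul (pi (fin_word f 0 n0)) (om_omega pi (pi (fin_word f n0 (n1 - n0))))].
Proof.
move=> Sf.
have [b [b0 b_inc b_col]] := ramsey_consecutive (fun i j => pi (fin_word f i (j - i))).
exists (b 0), (b 1); split; [exact: b0|exact: b_inc 0|].
rewrite (pi_nat_word_cat (b 0) Sf); congr mul.
have b_mono : {homo b : k l / k <= l} := homo_leq leqnn leq_trans (fun k => ltnW (b_inc k)).
rewrite (@pi_nat_word_blocks _ (fun k => b k - b 0)) //; first last.
- by move=> k; have := b_mono 0 k (leq0n _); have := b_inc k; lia.
- by rewrite subnn.
rewrite /om_omega /omega_word /nat_word; congr (pi (OWord _ _)).
apply: funext => k; rewrite -(b_col k); congr pi.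
have b0k := b_mono 0 k (leq0n _); have b0k1 := b_mono 0 k.+1 (leq0n _).
have -> : b k.+1 - b 0 - (b k - b 0) = b k.+1 - b k by lia.
by rewrite /fin_word; congr OWord; apply: funext => i /=; congr f; lia.
Qed.

End OrdinalMonoid.

Section PowerOrdinalMonoid.
Variables (M : finType) (pi : oword M -> M).
Hypothesis piH : ordinal_monoid (fun _ : M => True) pi.

Local Notation mul := (om_mul pi).
Local Notation one := (om_one pi).

Definition set_pi (W : oword {set M}) : {set M} :=
  [set y | `[< exists g : oidx W -> M,
      (forall i, g i \in oletter W i) /\ y = pi (OWord (olt W) g) >]].

Lemma in_set_pi W y : y \in set_pi W <->
  exists g : oidx W -> M, (forall i, g i \in oletter W i) /\ y = pi (OWord (olt W) g).
Proof. by rewrite inE; split => /asboolP. Qed.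

Lemma set_pi_iso_sub (w1 w2 : oword {set M}) : valid_word w2 -> word_iso w1 w2 ->
  set_pi w1 \subset set_pi w2.
Proof.
case: w1 => I1 l1 f1; case: w2 => I2 l2 f2 v2 [F [[G FK GK] F_lt F_letter]].
apply/subsetP => y /in_set_pi [g [gf ->]]; apply/in_set_pi.
exists (fun j => g (G j)); split.
  by move=> j; have := F_letter (G j); rewrite /= GK => ->.
apply: (pi_iso piH) => //; exists F; split => //; first by exists G.
by move=> i /=; rewrite FK.
Qed.

Lemma set_pi_single X : set_pi (single_word X) = X.
Proof.
case: piH => _ _ pi_single _; apply/setP => y; apply/idP/idP.
- move=> /in_set_pi [g [gX ->]].
  have -> : OWord (olt (single_word X)) g = single_word (g tt).
    by rewrite /single_word; congr OWord; apply: funext; case.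
  by rewrite pi_single //; exact: gX tt.
- by move=> yX; apply/in_set_pi; exists (fun _ => y); rewrite -[LHS](pi_single y).
Qed.

Lemma set_pi_flatten (W : oword (oword {set M})) : valid_word W ->
  (forall i, valid_word (oletter W i)) ->
  set_pi (map_word set_pi W) = set_pi (flatten_word W).
Proof.
move=> vW vWi; case: piH => _ _ _ pi_assoc.
pose blocks (F : forall i, oidx (oletter W i) -> M) := @OWord (oword M) (oidx W) (olt W)
  (fun i => @OWord M (oidx (oletter W i)) (olt (oletter W i)) (F i)).
have pi_blocks F : pi (map_word pi (blocks F)) = pi (flatten_word (blocks F)).
  by apply: pi_assoc; [exact: vW|move=> i; split; [exact: vWi|]].
apply/setP => y; apply/idP/idP => /in_set_pi y_pi; apply/in_set_pi; move: y_pi.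
- case=> g [gW ->].
  have gW' i : exists F : oidx (oletter W i) -> M,
      (forall j, F j \in oletter (oletter W i) j) /\ g i = pi (OWord (olt (oletter W i)) F).
    exact/in_set_pi/gW.
  pose F i := sval (cid (gW' i)).
  have FP i := svalP (cid (gW' i)).
  exists (fun p => F (projT1 p) (projT2 p)); split; first by case=> i j /=; apply: (FP i).1.
  have -> : OWord (olt (map_word set_pi W)) g = map_word pi (blocks F).
    by rewrite /map_word /=; congr OWord; apply: funext => i; rewrite (FP i).2.
  by rewrite pi_blocks.
- case=> G [GW ->].
  pose F i (j : oidx (oletter W i)) := G (existT _ i j).
  exists (fun i => pi (OWord (olt (oletter W i)) (F i))); split.
    by move=> i; apply/in_set_pi; exists (F i); split => // j; apply: GW.
  have -> : OWord (olt (flatten_word W)) G = flatten_word (blocks F).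
    by rewrite /flatten_word /=; congr OWord; apply: funext; case.
  by rewrite -pi_blocks.
Qed.

Lemma set_pi_ordinal_monoid : ordinal_monoid (fun _ : {set M} => True) set_pi.
Proof.
split => //.
- move=> w1 w2 v1 v2 _ iso; apply/eqP; rewrite eqEsubset.
  by rewrite !set_pi_iso_sub; [|exact: v1|exact: word_iso_sym|exact: v2|exact: iso].
- by move=> X _; apply: set_pi_single.
- by move=> W vW vWi; apply: set_pi_flatten; [exact: vW|move=> i; apply: (vWi i).1].
Qed.

Lemma set_pi_ordered : ordered_by (fun _ : {set M} => True) (@set_le M) set_pi.
Proof.
move=> I lt f g _ fg; apply/subsetP => y /in_set_pi [k [kf ->]]; apply/in_set_pi.
by exists k; split => // i; have [_ _ /subsetP] := fg i; apply.
Qed.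

Lemma set_one_pi : set_one pi = set_pi (@eps_word {set M}).
Proof.
have eps_g g : OWord (olt (@eps_word {set M})) g = @eps_word M.
  by congr OWord; apply: funext; case.
apply/setP => y; rewrite inE; apply/idP/idP => [/eqP ->|/in_set_pi [g [_ ->]]].
- by apply/in_set_pi; exists (fun v : void => match v with end); rewrite eps_g.
- by rewrite eps_g.
Qed.

Lemma set_mul_pi X Y : set_mul pi X Y = set_pi (pair_word X Y).
Proof.
apply/setP => z; apply/idP/idP => [/imset2P [x y xX yY ->]|/in_set_pi [g [gXY ->]]].
- by apply/in_set_pi; exists (fun b : bool => if b then y else x); split; first case.
- apply/imset2P; exists (g false) (g true); [exact: gXY false|exact: gXY true|].
  by rewrite /om_mul /pair_word; congr (pi (OWord _ _)); apply: funext; case.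
Qed.

Lemma pi_fin_word_in_set_plus (X : {set M}) (f : nat -> M) a n :
  0 < n -> (forall k, f k \in X) -> pi (fin_word f a n) \in set_plus pi X.
Proof.
move=> n_gt0 fX; rewrite inE; apply/asboolP; exists (map f (iota a n)); split.
- by case: n n_gt0.
- by apply/allP => x /mapP [k _ ->].
- exact: (pi_fin_word_foldr piH).
Qed.

(* The letters of u v^omega, with u = foldr s and v = foldr t, listed as a
   sequence indexed by nat. *)
Definition lasso_seq (x0 : M) (s t : seq M) (n : nat) : M :=
  if n < size s then nth x0 s n else nth x0 t ((n - size s) %% size t).

Lemma set_omega_pi X : set_omega pi X = set_pi (omega_word X).
Proof.
apply/setP => z; apply/idP/idP => [|/in_set_pi [g [gX ->]]]; last first.
  have [n0 [n1 [n0_gt0 n01 ->]]] := pi_nat_word_omega piH (f := g) (fun _ => I).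
  apply/imset2P; exists (pi (fin_word g 0 n0)) (pi (fin_word g n0 (n1 - n0))) => //.
  - exact: pi_fin_word_in_set_plus n0_gt0 gX.
  - by apply: pi_fin_word_in_set_plus gX; rewrite subn_gt0.
case/imset2P => u v; rewrite !inE.
move=> /asboolP [s [s_nil sX ->]] /asboolP [t [t_nil tX ->]] ->.
have [x0 _] : exists x0, x0 \in s.
  by case: s s_nil sX => // x s' _ _; exists x; rewrite inE eqxx.
have t_gt0 : 0 < size t by case: t t_nil tX.
pose g := lasso_seq x0 s t.
apply/asboolP; exists g; split.
  move=> n; rewrite /g /lasso_seq; case: ifP => n_s.
    by move/allP: sX; apply; rewrite mem_nth.
  by move/allP: tX; apply; rewrite mem_nth // ltn_mod.
change (mul (foldr mul one s) (om_omega pi (foldr mul one t)) = pi (nat_word g)).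
rewrite (pi_nat_word_cat piH (size s) (fun _ => I)); congr mul.
  rewrite (pi_fin_word_foldr piH) //; congr foldr.
  rewrite -[LHS](mkseq_nth x0 s) /mkseq; apply/eq_in_map => k.
  by rewrite mem_iota /g /lasso_seq add0n => /andP [_ ->].
rewrite (@pi_nat_word_blocks _ _ _ piH _ (fun k => k * size t) (fun _ => I)) //; last first.
  by move=> k; rewrite mulSn -[X in X < _]add0n ltn_add2r.
rewrite /om_omega /omega_word /nat_word; congr (pi (OWord _ _)).
apply: funext => k; rewrite mulSn addnK (pi_fin_word_foldr piH) //; congr foldr.
rewrite -[LHS](mkseq_nth x0 t) /mkseq -(addn0 (k * size t)) iotaDl -map_comp.
apply/eq_in_map => i; rewrite mem_iota add0n => /andP [_ i_t] /=.
by rewrite /g /lasso_seq ltnNge leq_addr /= addKn modnMDl modn_small.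
Qed.

End PowerOrdinalMonoid.

Section FiniteMonoidPowers.
Variables (T : finType) (mul : T -> T -> T) (one : T).
Hypothesis mulA : forall x y z, mul (mul x y) z = mul x (mul y z).
Hypothesis mul1x : forall x, mul one x = x.
Hypothesis mulx1 : forall x, mul x one = x.

Local Notation pow := (mpow mul one).

Lemma mpowS x n : pow x n.+1 = mul x (pow x n).
Proof. by []. Qed.

Lemma mpowD x m n : pow x (m + n) = mul (pow x m) (pow x n).
Proof. by elim: m => [|m IH]; rewrite ?mul1x // addSn !mpowS IH mulA. Qed.

Lemma mpow_idem e n : mul e e = e -> pow e n.+1 = e.
Proof. by move=> ee; elim: n => [|n IH]; rewrite mpowS ?mulx1 ?IH. Qed.

Definition periodic_from x N p := 0 < p /\ forall n, N <= n -> pow x (n + p) = pow x n.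

Lemma mpow_periodic x : exists N p, periodic_from x N p.
Proof.
pose f (i : 'I_#|T|.+1) := pow x i.
have [i [j [ij fij]]] : exists i j : 'I_#|T|.+1, i < j /\ f i = f j.
  apply: contrapT => none.
  suff f_inj : injective f by have := leq_card f f_inj; rewrite card_ord ltnn.
  move=> i j fij; apply: val_inj; case: (ltngtP i j) => // [ij|ji]; exfalso; apply: none.
    by exists i, j.
  by exists j, i.
exists i, (j - i); split => [|n i_n]; first by rewrite subn_gt0.
have -> : n + (j - i) = (n - i) + j by have := ltnW ij; lia.
by rewrite mpowD -[pow x j]fij -mpowD subnK.
Qed.

Lemma periodic_fromM x N p n q : periodic_from x N p -> N <= n ->
  pow x (n + q * p) = pow x n.
Proof.
case=> p_gt0 xp Nn; elim: q => [|q IH]; first by rewrite addn0.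
by rewrite mulSn addnCA addnC xp ?IH // (leq_trans Nn) // leq_addr.
Qed.

Lemma periodic_from_modn x N p a b : periodic_from x N p -> N <= a -> N <= b ->
  a = b %[mod p] -> pow x a = pow x b.
Proof.
move=> xp; wlog ab : a b / a <= b.
  move=> W Na Nb ab_p; case: (leqP a b) => [ab|ba]; first exact: W.
  by symmetry; apply: W => //; apply: ltnW.
move=> Na _ /esym/eqP; rewrite eqn_mod_dvd // => /dvdnP [q ba_q].
by rewrite -(subnKC ab) ba_q (periodic_fromM _ xp).
Qed.

Lemma eventual_pow_periodic x (k : int) y N p : periodic_from x N p ->
  eventual_pow mul one x k y ->
  exists j n, [/\ N <= j, y = pow x j, (j%:Z = (n`!)%:Z + k)%R & p %| n`!].
Proof.
move=> [p_gt0 _] [N0 N0P].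
pose n := maxn N0 (maxn p (N + `|k|)).
have [j [j_n <-]] := N0P n (leq_maxl _ _).
exists j, n; split => //.
- have := fact_geq n; have : N + `|k| <= n by rewrite /n !leq_max leqnn !orbT.
  lia.
- by apply: dvdn_fact; rewrite p_gt0 /n !leq_max leqnn orbT.
Qed.

Lemma eventual_pow_mpow x N p j : periodic_from x N p -> N <= j ->
  eventual_pow mul one x j%:Z (pow x j).
Proof.
move=> xp Nj; exists p => n pn; exists (n`! + j); split; first by rewrite PoszD.
apply: (periodic_from_modn xp _ Nj); first exact: leq_trans Nj (leq_addl _ _).
have /eqP p_fact : p %| n`! by apply: dvdn_fact; case: xp => ->.
by rewrite -modnDml p_fact.
Qed.

End FiniteMonoidPowers.

Section PowerSetSharp.
Variables (M : finType) (pi : oword M -> M).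
Hypothesis piH : ordinal_monoid (fun _ : M => True) pi.

Local Notation smul := (set_mul pi).
Local Notation sone := (set_one pi).
Local Notation spow := (mpow smul sone).
Local Notation sharp := (set_sharp pi).
Local Notation periodic := (periodic_from smul sone).

Lemma in_set_mul X Y z :
  z \in smul X Y <-> exists x y, [/\ x \in X, y \in Y & z = om_mul pi x y].
Proof.
split; first by case/imset2P => x y xX yY ->; exists x, y.
by case=> x [y [xX yY ->]]; apply/imset2P; exists x y.
Qed.

Lemma set_mulA X Y Z : smul (smul X Y) Z = smul X (smul Y Z).
Proof.
apply/setP => w; apply/idP/idP.
- case/in_set_mul => _ [z [/in_set_mul [x [y [xX yY ->]]] zZ ->]].
  apply/in_set_mul; exists x, (om_mul pi y z); rewrite (om_mulA piH) //.
  by split => //; apply/in_set_mul; exists y, z.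
- case/in_set_mul => x [_ [xX /in_set_mul [y [z [yY zZ ->]]] ->]].
  apply/in_set_mul; exists (om_mul pi x y), z; rewrite (om_mulA piH) //.
  by split => //; apply/in_set_mul; exists x, y.
Qed.

Lemma set_mul1X X : smul sone X = X.
Proof.
apply/setP => w; apply/idP/idP.
- by case/in_set_mul => _ [x [/set1P -> xX ->]]; rewrite (om_mul1x piH).
- by move=> wX; apply/in_set_mul; exists (om_one pi), w; rewrite set11 (om_mul1x piH).
Qed.

Lemma set_mulX1 X : smul X sone = X.
Proof.
apply/setP => w; apply/idP/idP.
- by case/in_set_mul => x [_ [xX /set1P -> ->]]; rewrite (om_mulx1 piH).
- by move=> wX; apply/in_set_mul; exists w, (om_one pi); rewrite set11 (om_mulx1 piH).
Qed.

Lemma set_mulS (X X' Y Y' : {set M}) :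
  X' \subset X -> Y' \subset Y -> smul X' Y' \subset smul X Y.
Proof.
move=> /subsetP X'X /subsetP Y'Y; apply/subsetP => z /in_set_mul [x [y [xX yY ->]]].
by apply/in_set_mul; exists x, y; split; [apply: X'X|apply: Y'Y|].
Qed.

Lemma mpow_setS (X Y : {set M}) n : X \subset Y -> spow X n \subset spow Y n.
Proof. by move=> XY; elim: n => [|n IH] //; rewrite !mpowS set_mulS. Qed.

Local Notation spowD := (mpowD set_mulA set_mul1X).

Lemma in_set_sharp X N p : periodic X N p ->
  forall y, y \in sharp X <-> exists j, N <= j /\ y \in spow X j.
Proof.
move=> Xp y; rewrite inE; split.
- move=> /asboolP [k [Y [XkY yY]]].
  by have [j [n [Nj YE _ _]]] := eventual_pow_periodic Xp XkY; exists j; rewrite -YE.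
- case=> j [Nj yXj]; apply/asboolP; exists j, (spow X j); split => //.
  exact: eventual_pow_mpow Xp Nj.
Qed.

Lemma set_sharp_idem E : smul E E = E -> sharp E = E.
Proof.
move=> EE; have Ep : periodic E 1 1.
  by split => // [[|n]] // _; rewrite addn1 !(mpow_idem set_mulX1).
apply/setP => y; apply/idP/idP.
- by case/(in_set_sharp Ep) => [[|j]] [] //; rewrite (mpow_idem set_mulX1).
- by move=> yE; apply/(in_set_sharp Ep); exists 1; rewrite (mpow_idem set_mulX1).
Qed.

Lemma eventual_pow_sub_set_sharp X (k : int) Y :
  eventual_pow smul sone X k Y -> Y \subset sharp X.
Proof.
move=> XkY; have [N [p Xp]] := mpow_periodic set_mulA set_mul1X X.
have [j [n [Nj -> _ _]]] := eventual_pow_periodic Xp XkY.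
by apply/subsetP => y yXj; apply/(in_set_sharp Xp); exists j.
Qed.

Lemma set_mul_sharp_sharp X : smul (sharp X) (sharp X) = sharp X.
Proof.
have [N [p Xp]] := mpow_periodic set_mulA set_mul1X X.
have p_gt0 : 0 < p by case: Xp.
apply/setP => z; apply/idP/idP.
- case/in_set_mul => u [v [uX vX ->]].
  have [a [Na uXa]] := (in_set_sharp Xp u).1 uX.
  have [b [Nb vXb]] := (in_set_sharp Xp v).1 vX.
  apply/(in_set_sharp Xp); exists (a + b); split; first exact: leq_trans Na (leq_addr _ _).
  by rewrite spowD; apply/in_set_mul; exists u, v.
- case/(in_set_sharp Xp) => j [Nj zXj].
  (* split the exponent j as N + b with b >= N, after adding a multiple of p *)
  pose b := j + N * p - N.
  have Nb : N <= b by rewrite /b; nia.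
  have Xj : spow X (N + b) = spow X j.
    apply: (periodic_from_modn Xp) => //; first exact: leq_addr.
    have -> : N + b = j + N * p by rewrite /b; nia.
    by rewrite addnC modnMDl.
  move: zXj; rewrite -Xj spowD => /in_set_mul [u [v [uXN vXb ->]]].
  apply/in_set_mul; exists u, v; split => //; apply/(in_set_sharp Xp).
  + by exists N.
  + by exists b.
Qed.

Lemma set_sharp_eventual_idem X E : eventual_pow smul sone X 0 E -> sharp E = E.
Proof.
move=> X0E; have [N [p Xp]] := mpow_periodic set_mulA set_mul1X X.
have [j [n [Nj -> jn /eqP p_fact]]] := eventual_pow_periodic Xp X0E.
have j_fact : j = n`! by lia.
rewrite j_fact in Nj *; apply: set_sharp_idem; rewrite -spowD.
apply: (periodic_from_modn Xp _ Nj); first exact: leq_trans Nj (leq_addr _ _).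
by rewrite -modnDml p_fact.
Qed.

Lemma set_sharp_sharp X : sharp (sharp X) = sharp X.
Proof. exact/set_sharp_idem/set_mul_sharp_sharp. Qed.

Lemma set_sharpS (X Y : {set M}) : X \subset Y -> sharp X \subset sharp Y.
Proof.
move=> XY; have [N [p Xp]] := mpow_periodic set_mulA set_mul1X X.
have [N' [p' Yp']] := mpow_periodic set_mulA set_mul1X Y.
have p_gt0 : 0 < p by case: Xp.
apply/subsetP => z /(in_set_sharp Xp) [j [Nj zXj]].
apply/(in_set_sharp Yp'); exists (j + N' * p); split; first by nia.
by apply: (subsetP (mpow_setS _ XY)); rewrite (periodic_fromM _ Xp Nj).
Qed.

Lemma mpow_set_mul_shift X Y n :
  smul (smul X (spow (smul Y X) n)) Y = spow (smul X Y) n.+1.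
Proof.
elim: n => [|n IH]; first by rewrite set_mulX1 /= set_mulX1.
by rewrite mpowS [in RHS]mpowS -IH !set_mulA.
Qed.

Lemma set_sharp_mul X Y : sharp (smul X Y) = smul (smul X (sharp (smul Y X))) Y.
Proof.
have [N [p XYp]] := mpow_periodic set_mulA set_mul1X (smul X Y).
have [N' [p' YXp']] := mpow_periodic set_mulA set_mul1X (smul Y X).
have p_gt0 : 0 < p by case: XYp.
have p'_gt0 : 0 < p' by case: YXp'.
apply/setP => z; apply/idP/idP.
- case/(in_set_sharp XYp) => j [Nj zXYj].
  pose j' := j + N'.+1 * p.
  have XYj' : spow (smul X Y) j'.-1.+1 = spow (smul X Y) j.
    have -> : j'.-1.+1 = j' by rewrite /j'; nia.
    exact: periodic_fromM XYp Nj.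
  move: zXYj; rewrite -XYj' -mpow_set_mul_shift; apply/subsetP.
  apply: set_mulS => //; apply: set_mulS => //; apply/subsetP => s sYX.
  by apply/(in_set_sharp YXp'); exists j'.-1; split => //; rewrite /j'; nia.
- case/in_set_mul => _ [y [/in_set_mul [x [s [xX sYX ->]]] yY ->]].
  have [j [N'j sYXj]] := (in_set_sharp YXp' s).1 sYX.
  apply/(in_set_sharp XYp); exists (j + N * p').+1; split; first by nia.
  rewrite -mpow_set_mul_shift (periodic_fromM _ YXp' N'j).
  by apply/in_set_mul; exists (om_mul pi x s), y; split => //; apply/in_set_mul; exists x, s.
Qed.

End PowerSetSharp.

Section SetPiClosure.
Variables (M : finType) (pi : oword M -> M).
Hypothesis piH : ordinal_monoid (fun _ : M => True) pi.
Variable C : {set M} -> Prop.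
Hypothesis C_one : C (set_one pi).
Hypothesis C_mul : forall X Y, C X -> C Y -> C (set_mul pi X Y).
Hypothesis C_omega : forall X, C X -> C (set_omega pi X).

Local Notation PI := (set_pi pi).
Let PIH := set_pi_ordinal_monoid piH.

Lemma closed_set_pi_fin_word f a n : (forall k, C (f k)) -> C (PI (fin_word f a n)).
Proof.
move=> Cf; rewrite (pi_fin_word_foldr PIH) //; elim: n a => [|n IH] a /=.
  by rewrite /om_one -set_one_pi.
by rewrite /om_mul -set_mul_pi; apply: C_mul.
Qed.

Lemma closed_set_pi_nat_word f : (forall k, C (f k)) -> C (PI (nat_word f)).
Proof.
move=> Cf; have [n0 [n1 [_ _ ->]]] := pi_nat_word_omega PIH (f := f) (fun _ => I).
rewrite /om_mul /om_omega -set_mul_pi -set_omega_pi //.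
by apply: C_mul; [|apply: C_omega]; apply: closed_set_pi_fin_word.
Qed.

Section Word.
Variables (I : Type) (lt : I -> I -> Prop) (X : I -> {set M}) (code : I -> nat).
Hypotheses (code_inj : injective code) (irr : forall x, ~ lt x x)
  (tr : forall x y z, lt x y -> lt y z -> lt x z)
  (tot : forall x y, x = y \/ lt x y \/ lt y x) (wf : well_founded lt).
Hypothesis CX : forall k, C (X k).

Definition idx_le x y := x = y \/ lt x y.

(* [None] is a right end point beyond all indices. *)
Definition below k (o : option I) := if o is Some j then lt k j else True.

Definition segment i o k := idx_le i k /\ below k o.

Definition subword (P : I -> Prop) : oword {set M} :=
  @OWord {set M} {k : I | P k} (fun a b => lt (sval a) (sval b)) (fun a => X (sval a)).

Lemma valid_subword P : valid_word (subword P).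
Proof.
apply: (@valid_word_of _ _ _ _ (fun a => code (sval a))).
- by move=> a b /code_inj /sval_inj.
- by move=> a; apply: irr.
- by move=> a b c; apply: tr.
- by move=> a b; case: (tot (sval a) (sval b)) => [/sval_inj|]; auto.
- exact: wf_inverse_image wf.
Qed.

Lemma idx_le_lt_trans x y z : idx_le x y -> lt y z -> lt x z.
Proof. by case=> [->//|]; apply: tr. Qed.

Lemma idx_lt_le_trans x y z : lt x y -> idx_le y z -> lt x z.
Proof. by move=> xy [<-//|]; apply: tr. Qed.

Lemma idx_le_trans x y z : idx_le x y -> idx_le y z -> idx_le x z.
Proof. by move=> xy [<-//|yz]; right; apply: idx_le_lt_trans xy yz. Qed.

Lemma below_lt_trans m k o : lt m k -> below k o -> below m o.
Proof. by case: o => //= j; apply: tr. Qed.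

Lemma idx_lt_asym x y : lt x y -> lt y x -> False.
Proof. by move=> xy yx; apply: irr (tr xy yx). Qed.

Lemma idx_not_lt_le x y : ~ lt x y -> idx_le y x.
Proof. by move=> xy; case: (tot x y) => [->|[//|]]; [left|right]. Qed.

Definition end_lt (o1 o2 : option I) := if o1 is Some a then below a o2 else False.

Lemma well_founded_end_lt : well_founded end_lt.
Proof.
have AccSome a : Acc end_lt (Some a).
  by elim/(well_founded_ind wf): a => a IH; constructor; case=> // b; apply: IH.
by case=> [a|]; [|constructor; case]. 
Qed.

Lemma closed_subword_empty P : (forall k, ~ P k) -> C (PI (subword P)).
Proof.
move=> P0; suff <- : PI (@eps_word {set M}) = PI (subword P) by rewrite -set_one_pi.
apply: (pi_iso PIH); [exact: valid_subword|by case|].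
exists (fun v : void => match v with end); split; try by case.
apply: bij_of_inj_surj; first by case.
by case=> k Pk; exfalso; apply: P0 Pk.
Qed.

Lemma closed_segment_succ i o k : segment i o k -> (forall m, lt k m -> ~ below m o) ->
  C (PI (subword (segment i (Some k)))) -> C (PI (subword (segment i o))).
Proof.
move=> [ik ko] k_max Cik.
pose W := pair_word (subword (segment i (Some k))) (single_word (X k)).
have below_o (a : {m | segment i (Some k) m}) : segment i o (sval a).
  by case: a => m [im mk]; split => //; apply: below_lt_trans mk ko.
pose F (p : flat_idx W) : {m | segment i o m} := let: existT b a := p in
  (if b return oidx (oletter W b) -> {m | segment i o m}
   then fun _ => exist _ k (conj ik ko) else fun a => exist _ (sval a) (below_o a)) a.
have WE : PI (map_word PI W) = PI (subword (segment i o)).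
  apply: (pi_flatten_iso PIH); [exact: valid_pair_word| |exact: valid_subword|].
    by case; split; [exact: valid_single_word|by []|exact: valid_subword|by []].
  exists F; split.
  - apply: bij_of_inj_surj.
    + case=> [[] a] [[] b] /= ab.
      * by case: a; case: b.
      * exfalso; case: b ab => m [_ mk] /(congr1 sval) /= km.
        by rewrite km in mk; case: (irr mk).
      * exfalso; case: a ab => m [_ mk] /(congr1 sval) /= mk'.
        by rewrite mk' in mk; case: (irr mk).
      * by congr existT; apply: sval_inj; apply: (congr1 sval ab).
    + case=> m im; case: (tot m k) => [mk|[mk|km]].
      * by exists (existT _ true tt); apply: sval_inj; rewrite /= mk.
      * exists (existT (fun b => oidx (oletter W b)) false (exist _ m (conj im.1 mk))).
        exact: sval_inj.
      * by exfalso; case: im => _ /(k_max m km).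
  - case=> [[] a] [[] b] /=.
    + by rewrite flat_lt_same /=; split; [case|move=> /irr].
    + rewrite flat_lt_diff //=; split => // ba; exfalso.
      by case: b ba => m [_ mk] /= km; apply: idx_lt_asym km mk.
    + by rewrite flat_lt_diff //=; split => // _; apply: (svalP a).2.
    + by rewrite flat_lt_same /=; split; [case|right].
  - by case=> [[] a].
move: WE; rewrite -map_pair_word -set_mul_pi (set_pi_single piH) => <-.
exact: C_mul.
Qed.

(* Countability is what makes the chain cofinal: at step n it also climbs above
   the index with code n. *)
Lemma cofinal_chain i o : below i o ->
  (forall k, segment i o k -> exists m, lt k m /\ below m o) ->
  exists a : nat -> I, [/\ a 0 = i, forall n, lt (a n) (a n.+1),
    forall n, below (a n) o & forall k, segment i o k -> exists n, lt k (a n)].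
Proof.
move=> io no_max.
have step (p : nat * {k | segment i o k}) : exists y : {k | segment i o k},
    lt (sval p.2) (sval y) /\ forall c, code c = p.1 -> segment i o c -> lt c (sval y).
  case: p => n [x ix] /=.
  have [m [xm im m_ge]] : exists m, [/\ idx_le x m, segment i o m &
      forall c, code c = n -> segment i o c -> idx_le c m].
    case: (pselect (exists c, code c = n /\ segment i o c)) => [[c [cn ic]]|none].
      have code_n c' : code c' = n -> c' = c by move=> c'n; apply: code_inj; rewrite c'n.
      case: (pselect (lt x c)) => xc.
        by exists c; split => // [|c' /code_n ->]; [right|left].
      by exists x; split => // [|c' /code_n ->]; [left|move=> _; apply: idx_not_lt_le].
    by exists x; split => // [|c cn ic]; [left|exfalso; apply: none; exists c].
  have [y [my yo]] := no_max m im.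
  exists (exist _ y (conj (idx_le_trans im.1 (or_intror my)) yo)); split.
    exact: idx_le_lt_trans xm my.
  by move=> c cn ic; apply: idx_le_lt_trans (m_ge c cn ic) my.
have [next nextP] := choice step.
pose fix chain n := if n is n'.+1 then next (n', chain n')
  else exist (segment i o) i (conj (or_introl erefl) io).
exists (fun n => sval (chain n)); split => //.
- by move=> n; apply: (nextP (n, chain n)).1.
- by move=> n; apply: (svalP (chain n)).2.
- by move=> k ik; exists (code k).+1; apply: (nextP (code k, chain (code k))).2.
Qed.

Lemma set_pi_subword_blocks (a : nat -> I) o : (forall n, lt (a n) (a n.+1)) ->
  (forall n, below (a n) o) -> (forall k, segment (a 0) o k -> exists n, lt k (a n)) ->
  PI (subword (segment (a 0) o)) =
  PI (nat_word (fun n => PI (subword (segment (a n) (Some (a n.+1)))))).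
Proof.
move=> a_inc a_o a_cof.
have a_mono : {homo a : n m / n <= m >-> idx_le n m}.
  by apply: homo_leq => [x|y x z|n]; [left|apply: idx_le_trans|right].
pose block n := subword (segment (a n) (Some (a n.+1))).
have in_segment n (b : oidx (block n)) : segment (a 0) o (sval b).
  case: b => m [nm mn] /=; split; first exact: idx_le_trans (a_mono 0 n (leq0n n)) nm.
  exact: below_lt_trans mn (a_o n.+1).
have block_lt n m (b : oidx (block n)) (c : oidx (block m)) : n < m -> lt (sval b) (sval c).
  move=> nm; apply: idx_lt_le_trans (svalP b).2 (idx_le_trans (a_mono _ _ nm) (svalP c).1).
symmetry; apply: (pi_flatten_iso PIH (W := nat_word block)).
- exact: valid_nat_word.
- by move=> n; split; [exact: valid_subword|].
- exact: valid_subword.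
exists (fun p => exist _ (sval (projT2 p)) (in_segment _ (projT2 p))); split.
- apply: bij_of_inj_surj.
  + case=> n b [m c] /= /(congr1 sval) /= bc; case: (ltngtP n m) => nm.
    * by have := block_lt _ _ b c nm; rewrite bc => /irr.
    * by have := block_lt _ _ c b nm; rewrite bc => /irr.
    * by subst m; congr existT; apply: sval_inj.
  + case=> k ik.
    have k_below : exists n, `[< lt k (a n.+1) >].
      by have [n kn] := a_cof k ik; exists n; apply/asboolP; apply: tr kn (a_inc n).
    case: (ex_minnP k_below) => n /asboolP kn n_min.
    have nk : idx_le (a n) k.
      case: n kn n_min => [|n] kn n_min; first exact: ik.1.
      by apply: idx_not_lt_le => kn'; have := n_min n (introT (asboolP _) kn'); rewrite ltnn.
    by exists (existT (fun n => oidx (block n)) n (exist _ k (conj nk kn))); apply: sval_inj.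
- case=> n b [m c] /=; case: (ltngtP n m) => nm.
  + rewrite flat_lt_diff /=; last by move=> en; move: nm; rewrite en ltnn.
    by rewrite nm; split => // _; apply: block_lt.
  + rewrite flat_lt_diff /=; last by move=> en; move: nm; rewrite en ltnn.
    rewrite ltnNge (ltnW nm); split => // bc; exfalso.
    exact: idx_lt_asym bc (block_lt _ _ c b nm).
  + by subst m; rewrite flat_lt_same /= ltnn; split; [case|right].
- by case.
Qed.

Lemma closed_segment_limit i o : below i o ->
  (forall k, segment i o k -> exists m, lt k m /\ below m o) ->
  (forall j, below j o -> forall i', C (PI (subword (segment i' (Some j))))) ->
  C (PI (subword (segment i o))).
Proof.
move=> io no_max IH; have [a [<- a_inc a_o a_cof]] := cofinal_chain io no_max.
rewrite set_pi_subword_blocks //; apply: closed_set_pi_nat_word => n.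
exact: IH.
Qed.

Lemma closed_segment o i : C (PI (subword (segment i o))).
Proof.
elim/(well_founded_ind well_founded_end_lt): o i => o IH i.
case: (pselect (exists k, segment i o k)) => [[k0 ik0]|empty]; last first.
  by apply: closed_subword_empty => k ik; apply: empty; exists k.
have io : below i o by case: ik0 => [[<-|ik] k0o] //; apply: below_lt_trans ik k0o.
case: (pselect (exists k, segment i o k /\ forall m, lt k m -> ~ below m o)).
  case=> k [ik k_max]; apply: (closed_segment_succ ik k_max).
  by apply: (IH (Some k)); case: ik.
move=> no_succ; apply: closed_segment_limit => // [k ik|j jo i'].
  apply: contrapT => no_max; apply: no_succ; exists k; split => // m km mo.
  by apply: no_max; exists m.
exact: IH (Some j) jo i'.
Qed.

Lemma closed_set_pi_word : C (PI (OWord lt X)).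
Proof.
have vw : valid_word (OWord lt X) by apply: (@valid_word_of _ _ _ _ code).
case: (pselect (exists x : I, True)) => [[x _]|empty]; last first.
  suff <- : PI (@eps_word _) = PI (OWord lt X) by rewrite -set_one_pi.
  apply: (pi_iso PIH); [exact: vw|by case|].
  exists (fun v : void => match v with end); split; try by case.
  apply: bij_of_inj_surj; first by case.
  by move=> y; exfalso; apply: empty; exists y.
have [m m_min] : exists m, forall y, ~ lt y m.
  apply: contrapT => no_min; suff : forall y : I, False by apply.
  elim/(well_founded_ind wf) => y IH; apply: no_min; exists y => z zy.
  exact: IH z zy.
have m_le y : segment m None y.
  by split => //; case: (tot m y) => [->|[my|/m_min//]]; [left|right].
suff -> : PI (OWord lt X) = PI (subword (segment m None)) by apply: closed_segment.
apply: (pi_iso PIH); [exact: valid_subword|by []|].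
exists (fun y => exist _ y (m_le y)); split => //.
apply: bij_of_inj_surj => [y z /(congr1 sval)//|[y my]].
by exists y; apply: sval_inj.
Qed.

End Word.
End SetPiClosure.

Lemma power_monoid_with_merge (M : finType) (pi : oword M -> M) (C : {set M} -> Prop) :
  ordinal_monoid (fun _ : M => True) pi ->
  C (set_one pi) -> (forall X Y, C X -> C Y -> C (set_mul pi X Y)) ->
  (forall X, C X -> C (set_omega pi X)) -> (forall X, C X -> C (set_sharp pi X)) ->
  ordinal_monoid_with_merge C
    (set_one pi) (@set_le M) (set_mul pi) (set_omega pi) (set_sharp pi).
Proof.
move=> piH C_one C_mul C_omega C_sharp.
have [_ PI_iso PI_single PI_flatten] := set_pi_ordinal_monoid piH.
split.
- split => [X _|X Y _ _ XY YX|X Y Z _ _ _]; first exact: subxx.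
    by apply/eqP; rewrite eqEsubset XY YX.
  exact: subset_trans.
- exists (set_pi pi); split.
  + split.
    * case=> I lt X [[code code_inj] [irr tr tot wf]] CX.
      exact: (closed_set_pi_word piH C_one C_mul C_omega code_inj irr tr tot wf CX).
    * by move=> w1 w2 v1 v2 _; apply: PI_iso.
    * by move=> X _; apply: PI_single.
    * by move=> W vW vWi; apply: PI_flatten; [exact: vW|move=> i; split; [exact: (vWi i).1|]].
  + by move=> I lt f g v fg; apply: set_pi_ordered v _ => i; case: (fg i).
  + split; [exact: set_one_pi|by move=> X Y _ _; apply: set_mul_pi|].
    by move=> X _; apply: set_omega_pi.
- exact: C_sharp.
- by move=> X Y _ _; apply: set_sharpS.
- split.
  + by move=> X k Y _; apply: eventual_pow_sub_set_sharp.
  + by move=> X E _; apply: set_sharp_eventual_idem.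
  + by move=> X _; apply: set_mul_sharp_sharp.
  + by move=> X _; apply: set_sharp_sharp.
  + by move=> X Y _ _; apply: set_sharp_mul.
Qed.

Theorem lemma5p1 (M : finType) (pi : oword M -> M) (Sigma : finType) (h : Sigma -> M) :
  ordinal_monoid (fun _ : M => True) pi ->
  ordinal_monoid_with_merge (fun _ : {set M} => True)
    (set_one pi) (@set_le M) (set_mul pi) (set_omega pi) (set_sharp pi)
  /\
  ordinal_monoid_with_merge (Sat pi h)
    (set_one pi) (@set_le M) (set_mul pi) (set_omega pi) (set_sharp pi).
Proof.
move=> piH; split; apply: power_monoid_with_merge => //.
- exact: Sat_one.
- exact: Sat_mul.
- exact: Sat_omega.
- exact: Sat_sharp.
Qed.
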